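(* The classes of trajectories $D$ and $D_1$ coincide: every trajectory $\tilde{\mathbf r}_\lambda(t,a_0,\omega_0)$ with $\lambda>0$, $a_0>0$, $\omega_0\ne0$, $0<a_0^3\omega_0^2/(2\lambda)<2$, coincides for all $t\ge0$ with some trajectory $\tilde{\mathbf r}_{\lambda'}(t,1,\omega_0')$ with $\lambda'>0$, $\omega_0'\neq0$, $\omega_0'^2/(2\lambda')<2$ (and trivially $D_1\subset D$).
   Context: Fix $N\ge2$, masses $m_i>0$, $\gamma>0$. Planar configuration space $\mathfrak R=\{\mathbf r=(\mathbf r_1,\dots,\mathbf r_N)\in(\mathbb R^2)^N:\ \mathbf r_i\neq\mathbf r_j \text{ for } i\neq j\}$; $f(\mathbf r)=\sum_{i<j}\frac{\gamma m_im_j}{|\mathbf r_j-\mathbf r_i|}$, $g(\mathbf r)=\sum_i m_i|\mathbf r_i|^2$. Fix $\lambda_*>0$ and a global minimizer $\mathbf r_{\lambda_*}$ of $f+\lambda_*g$ on $\mathfrak R$; for every $\lambda>0$ put $\mathbf r_\lambda=(\lambda_*/\lambda)^{1/3}\mathbf r_{\lambda_*}$ (a global minimizer of $f+\lambda g$). Identify $\mathbb R^2$ with $\mathbb C$ and let $z_{j\lambda}\in\mathbb C$ correspond to $\mathbf r_{j\lambda}$. For $\lambda>0$, $a_0>0$, $\omega_0\ne0$ with $0<a_0^3\omega_0^2/(2\lambda)<2$, set $e=1-a_0^3\omega_0^2/(2\lambda)$ (so $|e|<1$), $p=a_0(1-e)$, $a(\varphi)=p/(1-e\cos\varphi)$,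 and let $\varphi(t)$ be defined by $a_0^2\omega_0\,t=\int_0^{\varphi(t)}\frac{p^2\,d\alpha}{(1-e\cos\alpha)^2}$. The trajectory $\tilde{\mathbf r}_\lambda(t,a_0,\omega_0)$, $t\ge0$, is the one whose $j$-th particle has complex position $Z_j(t)=z_{j\lambda}\,a(\varphi(t))\,e^{i\varphi(t)}$, $j=1,\dots,N$. $D$ is the class of all such trajectories with parameters satisfying $0<a_0^3\omega_0^2/(2\lambda)<2$, and $D_1\subset D$ the subclass with $a_0=1$ (condition $\omega_0^2/(2\lambda)<2$). *)

From Stdlib Require Import Reals List.
From Coquelicot Require Import Coquelicot.
Open Scope R_scope.

Definition sumN (n : nat) (F : nat -> R) : R :=
  fold_right Rplus 0 (map F (seq 0 n)).

(* A planar N-body configuration: particle i (0 <= i < N) has position r i,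
   a point of R^2 identified with C. Values at indices >= N are irrelevant. *)
Definition config := nat -> C.

Definition in_config_space (N : nat) (r : config) : Prop :=
  forall i j, (i < N)%nat -> (j < N)%nat -> i <> j -> r i <> r j.

Definition fpot (N : nat) (m : nat -> R) (gam : R) (r : config) : R :=
  sumN N (fun j => sumN j (fun i => gam * m i * m j / Cmod (Cminus (r j) (r i)))).

Definition gmom (N : nat) (m : nat -> R) (r : config) : R :=
  sumN N (fun i => m i * (Cmod (r i)) ^ 2).

Definition global_minimizer (N : nat) (m : nat -> R) (gam lam : R) (r : config) : Prop :=
  in_config_space N r /\
  forall r', in_config_space N r' ->
    fpot N m gam r + lam * gmom N m r <= fpot N m gam r' + lam * gmom N m r'.

Definition r_scaled (lamS : R) (rS : config) (lam : R) : config :=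
  fun j => Cmult (RtoC (Rpower (lamS / lam) (1 / 3))) (rS j).

Definition ecc (lam a0 w0 : R) : R := 1 - a0 ^ 3 * w0 ^ 2 / (2 * lam).
Definition pparam (lam a0 w0 : R) : R := a0 * (1 - ecc lam a0 w0).
Definition arad (lam a0 w0 phi : R) : R :=
  pparam lam a0 w0 / (1 - ecc lam a0 w0 * cos phi).

(* phi is the angle function: for t >= 0,
   a0^2 w0 t = int_0^{phi t} p^2 / (1 - e cos alpha)^2 d alpha
   (oriented Riemann integral; phi t < 0 when w0 < 0). The right-hand side is
   strictly increasing in phi t and onto R, so phi is uniquely determined on t >= 0. *)
Definition phi_spec (lam a0 w0 : R) (phi : R -> R) : Prop :=
  forall t, 0 <= t ->
    a0 ^ 2 * w0 * t =
    RInt (fun al => (pparam lam a0 w0) ^ 2 / (1 - ecc lam a0 w0 * cos al) ^ 2) 0 (phi t).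

(* Complex position of particle j at time t on the trajectory
   tilde r_lambda(t, a0, w0): Z_j(t) = z_{j lambda} a(phi t) e^{i phi t}. *)
Definition traj (lamS : R) (rS : config) (lam a0 w0 : R) (phi : R -> R)
  (t : R) (j : nat) : C :=
  Cmult (r_scaled lamS rS lam j)
        (Cmult (RtoC (arad lam a0 w0 (phi t))) (cos (phi t), sin (phi t))).

From Stdlib Require Import Reals Lra Lia Psatz.
From Coquelicot Require Import Coquelicot.
Open Scope R_scope.

(* The eccentricity depends on [a0] and [lam] only through [a0^3 / lam], so
   passing to [lam' = lam / a0^3] and [a0' = 1] keeps [e] and divides [p] by
   [a0]; the integrand defining [phi] then loses the factor [a0^2] that the
   left-hand side [a0^2 w0 t] loses too, so [phi] is unchanged, while the
   radius [a(phi)] shrinks by [a0]. The configuration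
   [r_lam' = (lamS / lam')^(1/3) rS] grows by exactly that factor, so the two
   trajectories coincide. *)

Lemma Rpower_pow_inv (n : nat) (x : R) :
  (0 < n)%nat -> 0 < x -> Rpower (x ^ n) (/ INR n) = x.
Proof.
  intros Hn Hx.
  rewrite <- Rpower_pow, Rpower_mult, Rinv_r by (auto; apply not_0_INR; lia).
  now apply Rpower_1.
Qed.

Definition orbit_integrand (lam a0 w0 : R) (al : R) : R :=
  pparam lam a0 w0 ^ 2 / (1 - ecc lam a0 w0 * cos al) ^ 2.

Lemma ecc_bounds (lam a0 w0 : R) :
  0 < a0 ^ 3 * w0 ^ 2 / (2 * lam) < 2 -> -1 < ecc lam a0 w0 < 1.
Proof. unfold ecc. lra. Qed.

Lemma one_sub_mul_cos_pos (e x : R) : -1 < e < 1 -> 0 < 1 - e * cos x.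
Proof. intros. pose proof (COS_bound x). destruct (Rle_dec 0 e); nra. Qed.

Lemma ex_RInt_orbit_integrand (lam a0 w0 a b : R) :
  -1 < ecc lam a0 w0 < 1 -> ex_RInt (orbit_integrand lam a0 w0) a b.
Proof.
  intros He.
  apply (@ex_RInt_continuous R_CompleteNormedModule). intros x _.
  apply continuity_pt_filterlim, derivable_continuous_pt, ex_derive_Reals_0.
  pose proof (one_sub_mul_cos_pos _ x He).
  unfold orbit_integrand. auto_derive. nra.
Qed.

Section Rescaling.

Variables lam a0 w0 : R.
Hypothesis Hlam : 0 < lam.
Hypothesis Ha0 : 0 < a0.

Let lam' := lam / a0 ^ 3.

Lemma orbit_ratio_rescale :
  w0 ^ 2 / (2 * lam') = a0 ^ 3 * w0 ^ 2 / (2 * lam).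
Proof. unfold lam'. pose proof (pow_lt a0 3 Ha0). field. lra. Qed.

Lemma ecc_rescale : ecc lam' 1 w0 = ecc lam a0 w0.
Proof. unfold ecc. rewrite <- orbit_ratio_rescale. now rewrite pow1, Rmult_1_l. Qed.

Lemma pparam_rescale : pparam lam a0 w0 = a0 * pparam lam' 1 w0.
Proof. unfold pparam. rewrite ecc_rescale. ring. Qed.

Lemma arad_rescale (phi : R) : arad lam a0 w0 phi = a0 * arad lam' 1 w0 phi.
Proof. unfold arad. rewrite pparam_rescale, ecc_rescale. unfold Rdiv. ring. Qed.

Lemma r_scaled_rescale (lamS : R) (rS : config) (j : nat) :
  0 < lamS ->
  r_scaled lamS rS lam' j = Cmult (RtoC a0) (r_scaled lamS rS lam j).
Proof.
  intros HlamS. pose proof (pow_lt a0 3 Ha0).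
  unfold r_scaled, lam'.
  replace (lamS / (lam / a0 ^ 3)) with (lamS / lam * a0 ^ 3) by (field; lra).
  rewrite <- Rpower_mult_distr by (auto; now apply Rdiv_lt_0_compat).
  replace (1 / 3) with (/ INR 3) by (simpl; field).
  rewrite Rpower_pow_inv by (auto; lia).
  now rewrite Rmult_comm, RtoC_mult, Cmult_assoc.
Qed.

Lemma traj_rescale (lamS : R) (rS : config) (phi : R -> R) (t : R) (j : nat) :
  0 < lamS ->
  traj lamS rS lam a0 w0 phi t j = traj lamS rS lam' 1 w0 phi t j.
Proof.
  intros HlamS. unfold traj.
  rewrite r_scaled_rescale, arad_rescale, RtoC_mult by auto.
  rewrite !Cmult_assoc. do 2 f_equal. apply Cmult_comm.
Qed.


Lemma orbit_integrand_rescale (al : R) :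
  orbit_integrand lam a0 w0 al = a0 ^ 2 * orbit_integrand lam' 1 w0 al.
Proof.
  unfold orbit_integrand. rewrite pparam_rescale, ecc_rescale. unfold Rdiv. ring.
Qed.

Lemma phi_spec_rescale (phi : R -> R) :
  -1 < ecc lam a0 w0 < 1 -> phi_spec lam a0 w0 phi -> phi_spec lam' 1 w0 phi.
Proof.
  intros He Hphi t Ht.
  specialize (Hphi t Ht). fold (orbit_integrand lam a0 w0) in Hphi.
  fold (orbit_integrand lam' 1 w0).
  rewrite (RInt_ext _ (fun al => scal (a0 ^ 2) (orbit_integrand lam' 1 w0 al)))
    in Hphi by (intros; apply orbit_integrand_rescale).
  rewrite (@RInt_scal R_CompleteNormedModule) in Hphi.
  2: { apply ex_RInt_orbit_integrand. now rewrite ecc_rescale. }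
  apply (Rmult_eq_reg_l (a0 ^ 2)); [|apply pow_nonzero; lra].
  transitivity (a0 ^ 2 * w0 * t); [ring|]. now rewrite Hphi.
Qed.

End Rescaling.

Theorem theorem8p1
  (N : nat) (m : nat -> R) (gam lamS : R) (rS : config)
  (HN : (2 <= N)%nat)
  (Hm : forall i, (i < N)%nat -> 0 < m i)
  (Hgam : 0 < gam)
  (HlamS : 0 < lamS)
  (Hmin : global_minimizer N m gam lamS rS) :
  forall (lam a0 w0 : R) (phi : R -> R),
    0 < lam -> 0 < a0 -> w0 <> 0 ->
    0 < a0 ^ 3 * w0 ^ 2 / (2 * lam) < 2 ->
    phi_spec lam a0 w0 phi ->
    exists (lam' w0' : R) (phi' : R -> R),
      0 < lam' /\ w0' <> 0 /\ w0' ^ 2 / (2 * lam') < 2 /\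
      phi_spec lam' 1 w0' phi' /\
      forall t, 0 <= t -> forall j, (j < N)%nat ->
        traj lamS rS lam a0 w0 phi t j = traj lamS rS lam' 1 w0' phi' t j.
Proof.
  intros lam a0 w0 phi Hlam Ha0 Hw0 Hratio Hphi.
  exists (lam / a0 ^ 3), w0, phi.
  split; [apply Rdiv_lt_0_compat; auto using pow_lt|].
  split; [exact Hw0|].
  split; [rewrite orbit_ratio_rescale by auto; lra|].
  split; [apply phi_spec_rescale; auto using ecc_bounds|].
  intros t _ j _. now apply traj_rescale.
Qed.
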